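(* Consider the $l$-th cycle of RPF-SFISTA and assume $\mu=\mu_{l-1}\in(0,\bar\mu]$. For $j\ge0$ and $x\in\mathcal H$ let $\sigma_j(x):=A_j[\phi(y_j)-\phi(x)]+\frac{\tau_j}{2}\|x-x_j\|^2$. Then for every iteration index $j\ge1$ generated in this cycle and every $x\in\mathcal H$, $$\sigma_{j-1}(x)-\sigma_j(x)\ \ge\ \frac{\chi A_jL_j}{2}\|y_j-\tilde x_{j-1}\|^2.$$
   Context: Setup. Let $f:\mathbb R^n\to\mathbb R$ be convex and differentiable with $\|\nabla f(z')-\nabla f(z)\|\le\bar L\|z'-z\|$ for all $z,z'\in\mathbb R^n$ (some $\bar L\ge0$). Let $h:\mathbb R^n\to(-\infty,\infty]$ be proper, lower semicontinuous and convex with domain $\mathcal H$. Let $\phi:=f+h$ be $\bar\mu$-strongly convex for some $\bar\mu>0$. Write $\ell_f(u;x):=f(x)+\langle\nabla f(x),u-x\rangle$. RPF-SFISTA. Parameters $\chi\in(0,1)$, $\beta>1$; inputs $\mu_0>0$, $\bar M_0>0$, $z_0\in\mathcal H$, $\hat\epsilon>0$. The method runs in cycles $l=1,2,\dots$. At the start of cycle $l$: choose $\underline M_l\in[\max\{\bar M_{l-1}/4,\bar M_0\},\bar M_{l-1}]$ (so $\underline M_1=\bar M_0$), set $\mu:=\mu_{l-1}$, $x_0:=z_{l-1}$, $\xi_0:=y_0:=x_0$, $A_0:=0$, $\tau_0:=1$, $L_0:=\underline M_l$. Then for $j=1,2,\dots$: (i) set $L_j:=L_{j-1}$; (ii) compute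 $a_{j-1}=\frac{\tau_{j-1}+\sqrt{\tau_{j-1}^2+4\tau_{j-1}A_{j-1}L_j}}{2L_j}$, $\tilde x_{j-1}=\frac{A_{j-1}y_{j-1}+a_{j-1}x_{j-1}}{A_{j-1}+a_{j-1}}$, $y_j=\arg\min_{u}\{\ell_f(u;\tilde x_{j-1})+h(u)+\frac{L_j}{2}\|u-\tilde x_{j-1}\|^2\}$; if $f(y_j)\le\ell_f(y_j;\tilde x_{j-1})+\frac{(1-\chi)L_j}{4}\|y_j-\tilde x_{j-1}\|^2$ go to (iii), otherwise replace $L_j$ by $\beta L_j$ and repeat (ii); (iii) set $\xi_j:=y_j$ if $\phi(y_j)\le\phi(\xi_{j-1})$ and $\xi_j:=\xi_{j-1}$ otherwise; $A_j:=A_{j-1}+a_{j-1}$; $\tau_j:=\tau_{j-1}+a_{j-1}\mu/2$; $s_j:=L_j(\tilde x_{j-1}-y_j)$; $x_j:=\tau_j^{-1}[\mu a_{j-1}y_j/2+\tau_{j-1}x_{j-1}-a_{j-1}s_j]$; $v_j:=\nabla f(y_j)-\nabla f(\tilde x_{j-1})+s_j$; (iv) if $\|\xi_j-x_0\|^2<\chi A_jL_j\|y_j-\tilde x_{j-1}\|^2$, the cycle ends with a restart: set $z_l:=\xi_j$, $\bar M_l:=L_j$, $\mu_l:=\mu/2$ and start cycle $l+1$; (v) otherwise, if $\|v_j\|\le\hat\epsilon$, stop and output $(y,v,\xi,L):=(y_j,v_j,\xi_j,L_j)$; else go to iteration $j+1$. In these formulas $L_j$, $a_{j-1}$, $\tilde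 x_{j-1}$, $y_j$ denote the final (accepted) values after the line search in (ii). *)

From HB Require Import structures.
From mathcomp Require Import all_boot all_order all_algebra.
From mathcomp Require Import all_classical all_reals all_analysis.
Set Implicit Arguments. Unset Strict Implicit. Unset Printing Implicit Defensive.
Import Order.TTheory GRing.Theory Num.Theory.
Import numFieldNormedType.Exports.
Local Open Scope ring_scope.

Section Defs.
Variables (R : realType) (n : nat).
Notation vec := 'rV[R]_n.

Definition dotv (u v : vec) : R := \sum_(i < n) u 0 i * v 0 i.
Definition nrm (u : vec) : R := Num.sqrt (dotv u u).

Definition has_gradient (f : vec -> R) (g : vec -> vec) (x : vec) : Prop :=
  forall eps : R, 0 < eps -> exists2 delta : R, 0 < delta &
    forall d : vec, nrm d < delta ->
      `| f (x + d) - f x - dotv (g x) d | <= eps * nrm d.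

Definition convex_fun (f : vec -> R) : Prop :=
  forall (x y : vec) (t : R), 0 < t < 1 ->
    f (t *: x + (1 - t) *: y) <= t * f x + (1 - t) * f y.

Definition econvex_fun (h : vec -> \bar R) : Prop :=
  forall (x y : vec) (t : R), 0 < t < 1 ->
    (h (t *: x + (1 - t) *: y)%R <= t%:E * h x + (1 - t)%:E * h y)%E.

Definition eproper (h : vec -> \bar R) : Prop :=
  (forall x, h x != -oo%E) /\ exists x, h x \is a fin_num.

Definition edom (h : vec -> \bar R) : set vec := [set x | (h x < +oo)%E].

Definition estrongly_convex (mu : R) (p : vec -> \bar R) : Prop :=
  forall (x y : vec) (t : R), 0 < t < 1 ->
    (p (t *: x + (1 - t) *: y)%R + (mu / 2 * t * (1 - t) * nrm (x - y) ^+ 2)%:E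
       <= t%:E * p x + (1 - t)%:E * p y)%E.

Definition phi_of (f : vec -> R) (h : vec -> \bar R) (x : vec) : \bar R :=
  ((f x)%:E + h x)%E.

Definition lin_f (f : vec -> R) (g : vec -> vec) (u x : vec) : R :=
  f x + dotv (g x) (u - x).

Definition a_of (tau A L : R) : R :=
  (tau + Num.sqrt (tau ^+ 2 + 4 * tau * A * L)) / (2 * L).
Definition xt_of (A a : R) (y x : vec) : vec :=
  (A + a)^-1 *: (A *: y + a *: x).

Definition prox_pt (f : vec -> R) (g : vec -> vec) (h : vec -> \bar R)
    (L : R) (xt y : vec) : Prop :=
  forall u : vec,
    ((lin_f f g y xt + L / 2 * nrm (y - xt) ^+ 2)%:E + h y
      <= (lin_f f g u xt + L / 2 * nrm (u - xt) ^+ 2)%:E + h u)%E.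

Definition ls_ok (f : vec -> R) (g : vec -> vec) (chi L : R) (xt y : vec) : Prop :=
  f y <= lin_f f g y xt + (1 - chi) * L / 4 * nrm (y - xt) ^+ 2.

Definition ls_rejected (f : vec -> R) (g : vec -> vec) (h : vec -> \bar R)
    (chi tau A L : R) (yprev xprev : vec) : Prop :=
  forall yy : vec,
    prox_pt f g h L (xt_of A (a_of tau A L) yprev xprev) yy ->
    ~ ls_ok f g chi L (xt_of A (a_of tau A L) yprev xprev) yy.

Definition sigma_of (f : vec -> R) (h : vec -> \bar R) (A tau : R) (y x z : vec)
    : \bar R :=
  (A%:E * (phi_of f h y - phi_of f h z) + (tau / 2 * nrm (z - x) ^+ 2)%:E)%E.

End Defs.

(* With s := L_{j+1} (xt_{j-1} - y_j), strong convexity of phi at the midpoint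
   of y_j and u, the optimality of the prox point y_j, the gradient inequality
   for f and the line-search test give
     phi(u) >= phi(y_j) + <s, u - y_j> + mubar/4 ||u - y_j||^2
               - (1 - chi) L_j/2 ||y_j - xt_{j-1}||^2.
   Weighting this by A_{j-1} at u = y_{j-1} and by a_{j-1} at u = x, the inner
   products recombine through the extrapolated point xt_{j-1} into
   A_j L_j ||y_j - xt_{j-1}||^2 + a_{j-1} <s, x - x_{j-1}>, and completing the
   square in x merges the quadratic terms into tau_j/2 ||x - x_j||^2 at the
   cost a_{j-1}^2 ||s||^2 / (2 tau_{j-1}), which equals A_j L_j/2 ||y_j - xt_{j-1}||^2
   by the choice of a_{j-1}. What is left is chi A_j L_j/2 ||y_j - xt_{j-1}||^2. *)

From HB Require Import structures.
From mathcomp Require Import all_boot all_order all_algebra.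
From mathcomp Require Import all_classical all_reals all_analysis.
From mathcomp Require Import ring lra.
Set Implicit Arguments. Unset Strict Implicit. Unset Printing Implicit Defensive.
Import Order.TTheory GRing.Theory Num.Theory.
Import numFieldNormedType.Exports.
Local Open Scope ring_scope.

Lemma ler_small_slack (R : realFieldType) (x y c : R) : 0 <= c ->
  (forall t, 0 < t < 1 -> x <= y + c * t) -> x <= y.
Proof.
move=> c_ge0 slack; apply/ler_addgt0Pr => e e_gt0.
have t_gt0 : 0 < e / (e + c + 1) by apply: divr_gt0; lra.
have t_lt1 : e / (e + c + 1) < 1 by rewrite ltr_pdivrMr; lra.
have ct_le : c * (e / (e + c + 1)) <= e.
  by rewrite mulrA ler_pdivrMr; nra.
have := slack _ (andb_true_intro (conj t_gt0 t_lt1)); lra.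
Qed.

Ltac dotv_coordinatewise :=
  apply/eqP; rewrite -subr_eq0; apply/eqP;
  rewrite /dotv ?opprD ?opprK ?mulr_sumr -?sumrN -?big_split /=;
  apply: big1 => i _; rewrite !mxE.

Section InnerProduct.
Variables (R : realType) (n : nat).
Notation vec := 'rV[R]_n.

Lemma dotv_ge0 (u : vec) : 0 <= dotv u u.
Proof. by apply: sumr_ge0 => i _; rewrite -expr2 sqr_ge0. Qed.

Lemma nrm_ge0 (u : vec) : 0 <= nrm u.
Proof. exact: sqrtr_ge0. Qed.

Lemma sqr_nrm (u : vec) : nrm u ^+ 2 = dotv u u.
Proof. by rewrite /nrm sqr_sqrtr // dotv_ge0. Qed.

Lemma dotvZr (u v : vec) (t : R) : dotv u (t *: v) = t * dotv u v.
Proof. by dotv_coordinatewise; ring. Qed.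

Lemma nrmZ (u : vec) (t : R) : 0 <= t -> nrm (t *: u) = t * nrm u.
Proof.
move=> t_ge0; rewrite /nrm.
have -> : dotv (t *: u) (t *: u) = t ^+ 2 * dotv u u by dotv_coordinatewise; ring.
by rewrite sqrtrM ?sqr_ge0 // sqrtr_sqr ger0_norm.
Qed.

Lemma combE (u v : vec) (t : R) : t *: u + (1 - t) *: v = v + t *: (u - v).
Proof. by apply/rowP => i; rewrite !mxE; ring. Qed.

Lemma dotv_combr (c u v w : vec) (t : R) :
  dotv c (t *: u + (1 - t) *: v - w) = t * dotv c (u - w) + (1 - t) * dotv c (v - w).
Proof. by dotv_coordinatewise; ring. Qed.

Lemma sqr_nrm_combB (u v w : vec) (t : R) :
  nrm (t *: u + (1 - t) *: v - w) ^+ 2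
  = nrm (v - w) ^+ 2 + 2 * t * dotv (v - w) (u - v) + t ^+ 2 * nrm (u - v) ^+ 2.
Proof. by rewrite !sqr_nrm; dotv_coordinatewise; ring. Qed.

Lemma dotv_extrapolation (z x y y' : vec) (A a L : R) : A + a != 0 ->
  A * dotv (L *: (xt_of A a y x - y')) (y - y')
    + a * dotv (L *: (xt_of A a y x - y')) (z - y')
  = (A + a) * L * nrm (y' - xt_of A a y x) ^+ 2
    + a * dotv (L *: (xt_of A a y x - y')) (z - x).
Proof. by move=> Aa_neq0; rewrite sqr_nrm /xt_of; dotv_coordinatewise; field. Qed.

(* Completing the square in [z]: the difference of the two sides is
   [al / (2 tau (tau + al)) * ||tau (y - x) + a s||^2]. *)
Lemma sqr_nrm_merge (z x y s : vec) (tau al a : R) : 0 < tau -> 0 <= al ->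
  - (a ^+ 2 * nrm s ^+ 2 / (2 * tau))
  <= tau / 2 * nrm (z - x) ^+ 2 + a * dotv s (z - x) + al / 2 * nrm (z - y) ^+ 2
     - (tau + al) / 2
       * nrm (z - (tau + al)^-1 *: (al *: y + tau *: x - a *: s)) ^+ 2.
Proof.
move=> tau_gt0 al_ge0; rewrite !sqr_nrm -subr_ge0 opprK [a ^+ 2 * _ / _]mulrAC.
rewrite /dotv !mulr_sumr -big_split -sumrN -!big_split /=.
apply: sumr_ge0 => i _; rewrite !mxE.
set Z := z 0 i; set X := x 0 i; set Y := y 0 i; set S := s 0 i.
have tau_al_neq0 : tau + al != 0 by apply/lt0r_neq0; lra.
have -> : tau / 2 * ((Z - X) * (Z - X)) + a * (S * (Z - X))
    + al / 2 * ((Z - Y) * (Z - Y))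
    - (tau + al) / 2 * ((Z - (tau + al)^-1 * (al * Y + tau * X - a * S))
                        * (Z - (tau + al)^-1 * (al * Y + tau * X - a * S)))
    + a ^+ 2 / (2 * tau) * (S * S)
  = al / (2 * tau * (tau + al)) * (tau * (Y - X) + a * S) ^+ 2.
  by field; rewrite tau_al_neq0 lt0r_neq0.
by apply: mulr_ge0; [apply: divr_ge0 => //; apply: mulr_ge0; lra | exact: sqr_ge0].
Qed.

End InnerProduct.

Section StepSize.
Variable R : realType.

(* [a_of tau A L] is the positive root of [L a^2 = tau (A + a)]. *)
Lemma a_of_gt0 (tau A L : R) : 0 < tau -> 0 <= A -> 0 < L -> 0 < a_of tau A L.
Proof.
move=> tau_gt0 A_ge0 L_gt0; rewrite /a_of; apply: divr_gt0; last lra.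
have := sqrtr_ge0 (tau ^+ 2 + 4 * tau * A * L); lra.
Qed.

Lemma a_of_sqr (tau A L : R) : 0 < tau -> 0 <= A -> 0 < L ->
  a_of tau A L ^+ 2 * L = tau * (A + a_of tau A L).
Proof.
move=> tau_gt0 A_ge0 L_gt0; rewrite /a_of; set S := Num.sqrt _.
have S_sqr : S ^+ 2 = tau ^+ 2 + 4 * tau * A * L.
  rewrite sqr_sqrtr //; apply: addr_ge0; first exact: sqr_ge0.
  by rewrite -!mulrA; apply: mulr_ge0; [lra | rewrite !mulr_ge0 // ltW].
have L_neq0 : L != 0 by apply/lt0r_neq0.
apply/eqP; rewrite -subr_eq0; apply/eqP.
have -> : ((tau + S) / (2 * L)) ^+ 2 * L - tau * (A + (tau + S) / (2 * L))
  = (S ^+ 2 - (tau ^+ 2 + 4 * tau * A * L)) / (4 * L) by field.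
by rewrite S_sqr subrr mul0r.
Qed.

End StepSize.

Lemma fine_ecomb (R : realType) (pw pu pv : \bar R) (c t : R) :
  pu \is a fin_num -> pv \is a fin_num -> pw != -oo%E ->
  (pw + c%:E <= t%:E * pu + (1 - t)%:E * pv)%E ->
  pw \is a fin_num /\ fine pw + c <= t * fine pu + (1 - t) * fine pv.
Proof.
move=> pu_fin pv_fin; rewrite -(fineK pu_fin) -(fineK pv_fin) -!EFinM -EFinD.
by case: pw => [r _| |] //; rewrite lee_fin.
Qed.

Section ProxStep.
Variables (R : realType) (n : nat).
Notation vec := 'rV[R]_n.
Variables (f : vec -> R) (g : vec -> vec) (h : vec -> \bar R).
Hypothesis f_grad : forall z, has_gradient f g z.
Hypothesis f_convex : convex_fun f.
Hypothesis h_convex : econvex_fun h.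
Hypothesis h_gtNinfty : forall x, h x != -oo%E.

Lemma lin_f_le (w x : vec) : lin_f f g w x <= f w.
Proof.
rewrite /lin_f; set D := nrm (w - x).
have D_ge0 : 0 <= D := nrm_ge0 _.
apply: (@ler_small_slack _ _ _ (D + 1)); first lra.
move=> e /andP[e_gt0 e_lt1].
have [del del_gt0 near_x] := f_grad x e_gt0.
set t := del / (2 * (del + D)).
have t_gt0 : 0 < t by apply: divr_gt0 => //; lra.
have t_lt1 : t < 1 by rewrite /t ltr_pdivrMr; lra.
have tD_lt : t * D < del by rewrite /t mulrAC ltr_pdivrMr; nra.
have := near_x (t *: (w - x)); rewrite nrmZ ?(ltW t_gt0) // -/D dotvZr.
move=> /(_ tD_lt) /ler_normlP[taylor _].
have := f_convex w x (andb_true_intro (conj t_gt0 t_lt1)); rewrite combE => cvx.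
suff : t * (f x + dotv (g x) (w - x)) <= t * (f w + (D + 1) * e) by rewrite ler_pM2l.
nra.
Qed.

Lemma prox_pt_fin (L : R) (xt y u : vec) :
  prox_pt f g h L xt y -> h u \is a fin_num -> h y \is a fin_num.
Proof.
move=> /(_ u) + u_fin; rewrite -(fineK u_fin) -EFinD fin_numE h_gtNinfty /=.
by case: (h y).
Qed.

Lemma prox_pt_le (L : R) (xt y u : vec) : 0 < L -> prox_pt f g h L xt y ->
  h y \is a fin_num -> h u \is a fin_num ->
  lin_f f g y xt + fine (h y) + dotv (L *: (xt - y)) (u - y)
  <= lin_f f g u xt + fine (h u).
Proof.
move=> L_gt0 prox y_fin u_fin.
have r_ge0 : 0 <= L / 2 * nrm (u - y) ^+ 2 by apply: mulr_ge0; [lra | exact: sqr_ge0].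
apply: (@ler_small_slack _ _ _ _ r_ge0) => t /andP[t_gt0 t_lt1].
set w := t *: u + (1 - t) *: y.
have [w_fin hw_le] :
    h w \is a fin_num /\ fine (h w) + 0 <= t * fine (h u) + (1 - t) * fine (h y).
  by apply: fine_ecomb => //; rewrite adde0; apply: h_convex; rewrite t_gt0.
have := prox w; rewrite -(fineK y_fin) -(fineK w_fin) -!EFinD lee_fin.
have -> : dotv (L *: (xt - y)) (u - y) = - (L * dotv (y - xt) (u - y)).
  by dotv_coordinatewise; ring.
rewrite /lin_f dotv_combr sqr_nrm_combB => prox_w.
suff : t * (f xt + dotv (g xt) (y - xt) + fine (h y) - L * dotv (y - xt) (u - y))
    <= t * (f xt + dotv (g xt) (u - xt) + fine (h u) + L / 2 * nrm (u - y) ^+ 2 * t).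
  by rewrite ler_pM2l.
nra.
Qed.

Lemma fine_phi_of (u : vec) :
  h u \is a fin_num -> fine (phi_of f h u) = f u + fine (h u).
Proof. by move=> u_fin; rewrite /phi_of -(fineK u_fin). Qed.

Variables (mubar chi : R).
Hypothesis phi_strongly_convex : estrongly_convex mubar (phi_of f h).

(* Strong convexity is used at the midpoint of [y] and [u], where the prox
   inequality, the gradient inequality and the line-search test all apply. *)
Lemma prox_step_descent (L : R) (xt y u : vec) : 0 < L ->
  prox_pt f g h L xt y -> ls_ok f g chi L xt y ->
  h y \is a fin_num -> h u \is a fin_num ->
  f y + fine (h y) + dotv (L *: (xt - y)) (u - y) + mubar / 4 * nrm (u - y) ^+ 2
  <= f u + fine (h u) + (1 - chi) * L / 2 * nrm (y - xt) ^+ 2.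
Proof.
move=> L_gt0 prox ls y_fin u_fin.
have half01 : 0 < (2^-1 : R) < 1 by apply/andP; split; lra.
set w := 2^-1 *: u + (1 - 2^-1) *: y.
have phi_fin v : h v \is a fin_num -> phi_of f h v \is a fin_num.
  by move=> v_fin; rewrite /phi_of fin_numD v_fin.
have phiw_gtNinfty : phi_of f h w != -oo%E.
  by rewrite /phi_of; case: (h w) (h_gtNinfty w).
have [phiw_fin midpoint] := fine_ecomb (phi_fin _ u_fin) (phi_fin _ y_fin)
  phiw_gtNinfty (phi_strongly_convex u y half01).
have w_fin : h w \is a fin_num by move: phiw_fin; rewrite /phi_of fin_numD.
rewrite !fine_phi_of // in midpoint.
have := prox_pt_le L_gt0 prox y_fin w_fin.
have -> : dotv (L *: (xt - y)) (w - y) = 2^-1 * dotv (L *: (xt - y)) (u - y).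
  by rewrite /w combE addrAC subrr add0r dotvZr.
have := lin_f_le w xt; rewrite /ls_ok in ls.
lra.
Qed.

Lemma sigma_ofE (A tau : R) (y x z : vec) :
  h y \is a fin_num -> h z \is a fin_num ->
  sigma_of f h A tau y x z
  = (A * (f y + fine (h y) - (f z + fine (h z))) + tau / 2 * nrm (z - x) ^+ 2)%:E.
Proof.
move=> y_fin z_fin; rewrite /sigma_of /phi_of -{1}(fineK y_fin) -{1}(fineK z_fin).
by rewrite -!EFinD.
Qed.

Lemma sigma_of_decrease (mu tau A L a : R) (x y y' xt z : vec) :
  0 < mu <= mubar -> 0 < tau -> 0 <= A -> 0 < L ->
  a = a_of tau A L -> xt = xt_of A a y x ->
  prox_pt f g h L xt y' -> ls_ok f g chi L xt y' ->
  h y \is a fin_num -> h z \is a fin_num ->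
  ((chi * (A + a) * L / 2 * nrm (y' - xt) ^+ 2)%:E
   <= sigma_of f h A tau y x z
      - sigma_of f h (A + a) (tau + a * mu / 2) y'
          ((tau + a * mu / 2)^-1 *:
             ((mu * a / 2) *: y' + tau *: x - a *: (L *: (xt - y')))) z)%E.
Proof.
move=> /andP[mu_gt0 mu_le] tau_gt0 A_ge0 L_gt0 a_def xt_def prox ls y_fin z_fin.
have a_gt0 : 0 < a by rewrite a_def a_of_gt0.
have aL : a ^+ 2 * L = tau * (A + a) by rewrite a_def a_of_sqr.
have y'_fin := prox_pt_fin prox z_fin.
rewrite !sigma_ofE // -EFinB lee_fin.
have descent_y := ler_wpM2l A_ge0 (prox_step_descent L_gt0 prox ls y'_fin y_fin).
have descent_z := ler_wpM2l (ltW a_gt0) (prox_step_descent L_gt0 prox ls y'_fin z_fin).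
have Aa_neq0 : A + a != 0 by apply/lt0r_neq0; lra.
have := dotv_extrapolation z x y y' L Aa_neq0; rewrite -xt_def => extra.
have al_ge0 : 0 <= mu * a / 2 by apply: divr_ge0; [apply: mulr_ge0; lra | lra].
have := sqr_nrm_merge z x y' (L *: (xt - y')) a tau_gt0 al_ge0.
have -> : tau + mu * a / 2 = tau + a * mu / 2 by rewrite (mulrC mu).
have -> : a ^+ 2 * nrm (L *: (xt - y')) ^+ 2 / (2 * tau)
    = (A + a) * L * nrm (y' - xt) ^+ 2 / 2.
  have -> : nrm (L *: (xt - y')) ^+ 2 = L ^+ 2 * nrm (y' - xt) ^+ 2.
    by rewrite !sqr_nrm; dotv_coordinatewise; ring.
  have -> : a ^+ 2 * (L ^+ 2 * nrm (y' - xt) ^+ 2) / (2 * tau)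
      = a ^+ 2 * L * L * nrm (y' - xt) ^+ 2 / (2 * tau) by ring.
  by rewrite aL; field; rewrite lt0r_neq0.
move=> merge.
have mu_r : a * (mu / 4 * nrm (z - y') ^+ 2) <= a * (mubar / 4 * nrm (z - y') ^+ 2).
  by apply: ler_wpM2l; [lra | apply: ler_wpM2r; [exact: sqr_ge0 | lra]].
have r_ge0 : 0 <= A * (mubar / 4 * nrm (y - y') ^+ 2).
  by apply: mulr_ge0 => //; apply: mulr_ge0; [lra | exact: sqr_ge0].
lra.
Qed.

End ProxStep.

(* One cycle of RPF-SFISTA: the cycle starts at x0 = z_{l-1} with
   mu = mu_{l-1} and L_0 = underline M_l; iterations j = 1, ..., J are
   generated (the cycle neither restarted nor stopped at any j < J). *)
Theorem lemmaA6 (R : realType) (n : nat)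
    (f : 'rV[R]_n -> R) (g : 'rV[R]_n -> 'rV[R]_n) (h : 'rV[R]_n -> \bar R)
    (Lbar mubar chi beta epshat : R)
    (mu L0 : R) (x0 : 'rV[R]_n) (J : nat)
    (A tau a L : nat -> R) (x y xi xt s v : nat -> 'rV[R]_n) :
  (* assumptions on f, h, phi *)
  (forall z, has_gradient f g z) ->
  0 <= Lbar ->
  (forall z z', nrm (g z' - g z) <= Lbar * nrm (z' - z)) ->
  convex_fun f ->
  eproper h -> lower_semicontinuous h -> econvex_fun h ->
  0 < mubar -> estrongly_convex mubar (phi_of f h) ->
  (* parameters and inputs *)
  0 < chi < 1 -> 1 < beta -> 0 < epshat ->
  (* cycle data *)
  0 < mu <= mubar -> edom h x0 -> 0 < L0 ->
  x 0%N = x0 -> xi 0%N = x0 -> y 0%N = x0 -> A 0%N = 0 -> tau 0%N = 1 ->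
  L 0%N = L0 ->
  (* iteration j.+1 of the cycle, for j.+1 <= J *)
  (forall j : nat, (j < J)%N ->
     [/\ (exists k : nat, L j.+1 = beta ^+ k * L j /\
            forall i : nat, (i < k)%N ->
              ls_rejected f g h chi (tau j) (A j) (beta ^+ i * L j) (y j) (x j)),
         a j = a_of (tau j) (A j) (L j.+1) &
         xt j = xt_of (A j) (a j) (y j) (x j)] /\
     [/\ prox_pt f g h (L j.+1) (xt j) (y j.+1),
         ls_ok f g chi (L j.+1) (xt j) (y j.+1) &
         xi j.+1 = (if (phi_of f h (y j.+1) <= phi_of f h (xi j))%E
                    then y j.+1 else xi j)] /\
     [/\ A j.+1 = A j + a j,
         tau j.+1 = tau j + a j * mu / 2,
         s j.+1 = L j.+1 *: (xt j - y j.+1),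
         x j.+1 = (tau j.+1)^-1 *:
                    ((mu * a j / 2) *: y j.+1 + tau j *: x j - a j *: s j.+1) &
         v j.+1 = g (y j.+1) - g (xt j) + s j.+1]) ->
  (* neither the restart test (iv) nor the stopping test (v) fired before J *)
  (forall j : nat, (0 < j < J)%N ->
     ~ (nrm (xi j - x0) ^+ 2 < chi * A j * L j * nrm (y j - xt j.-1) ^+ 2) /\
     ~ (nrm (v j) <= epshat)) ->
  forall j : nat, (j < J)%N ->
  forall z : 'rV[R]_n, edom h z ->
    ((chi * A j.+1 * L j.+1 / 2 * nrm (y j.+1 - xt j) ^+ 2)%:E
      <= sigma_of f h (A j) (tau j) (y j) (x j) z
         - sigma_of f h (A j.+1) (tau j.+1) (y j.+1) (x j.+1) z)%E.
Proof.
move=> f_grad _ _ f_convex [h_gtNinfty _] _ h_convex _ phi_sc _ beta_gt1 _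
  mu_range x0_dom L0_gt0 _ _ y0 A0 tau0 L0_def step _ j j_lt z z_dom.
have dom_fin u : edom h u -> h u \is a fin_num.
  by move=> u_dom; rewrite fin_numE h_gtNinfty lt_eqF.
have params_pos k : (k <= J)%N -> [/\ 0 < tau k, 0 <= A k & 0 < L k].
  elim: k => [_ | k IH k_lt]; first by rewrite tau0 A0 L0_def ltr01 lexx.
  have [tau_gt0 A_ge0 L_gt0] := IH (ltnW k_lt).
  have [[[i [L_def _]] a_def _] [_ [-> -> _ _ _]]] := step k k_lt.
  have L'_gt0 : 0 < L k.+1.
    by rewrite L_def mulr_gt0 // exprn_gt0 // (lt_trans ltr01).
  have a_gt0 : 0 < a k by rewrite a_def a_of_gt0.
  have amu_gt0 : 0 < a k * mu by rewrite mulr_gt0 //; case/andP: mu_range.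
  by split; lra.
have y_fin : h (y j) \is a fin_num.
  case: j j_lt => [_ | k k_lt]; first by rewrite y0 dom_fin.
  by have [_ [[prox _ _] _]] := step k (ltnW k_lt); apply: prox_pt_fin prox (dom_fin _ z_dom).
have [[_ a_def xt_def] [[prox ls _] [-> -> -> -> _]]] := step j j_lt.
have [tau_gt0 A_ge0 _] := params_pos j (ltnW j_lt).
have [_ _ L_gt0] := params_pos j.+1 j_lt.
exact: (sigma_of_decrease f_grad f_convex h_convex h_gtNinfty phi_sc mu_range
  tau_gt0 A_ge0 L_gt0 a_def xt_def prox ls y_fin (dom_fin _ z_dom)).
Qed.
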